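(* Let $\mathsf{X}$ be a finite set of propositional variables. A state property $\mathcal{P}$ over $\mathsf{X}$ is of the form $\|\phi\|_{\mathsf{X}}$ for some formula $\phi$ of $\mathsf{BSML}^{\sqcup}$ with propositional variables in $\mathsf{X}$ if and only if $\mathcal{P}$ is invariant under $k$-bisimulation for some $k\in\mathbb{N}$.
   Context: Formulas of $\mathsf{BSML}^{\sqcup}$: $\phi ::= p \mid \neg\phi \mid (\phi\wedge\phi) \mid (\phi\vee\phi) \mid \Diamond\phi \mid \mathrm{NE}\mid \phi\sqcup\phi$. A model over $\mathsf{X}$ is $M=(W,R,V)$ with $W\ne\emptyset$, $R\subseteq W\times W$, $V:\mathsf{X}\to\wp(W)$; a state is $s\subseteq W$; $R[w]=\{v:wRv\}$. Support/anti-support: $s\models p$ iff $s\subseteq V(p)$; $s\dashv p$ iff $s\cap V(p)=\emptyset$; $s\models\mathrm{NE}$ iff $s\ne\emptyset$; $s\dashv\mathrm{NE}$ iff $s=\emptyset$; $s\models\neg\phi$ iff $s\dashv\phi$; $s\dashv\neg\phi$ iff $s\models\phi$; $s\models\phi\wedge\psi$ iff both; $s\dashv\phi\wedge\psi$ iff $s=t\cup u$ with $t\dashv\phi$, $u\dashv\psi$; $s\models\phi\vee\psi$ iff $s=t\cup u$ with $t\models\phi$, $u\models\psi$; $s\dashv\phi\vee\psi$ iff $s\dashv\phi$ and $s\dashv\psi$; $s\models\phi\sqcup\psi$ iff $s\models\phi$ or $s\models\psi$; $s\dashv\phi\sqcup\psi$ iff $s\dashv\phi$ and $s\dashv\psi$;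 $s\models\Diamond\phi$ iff each $w\in s$ has a nonempty $t\subseteq R[w]$ with $t\models\phi$; $s\dashv\Diamond\phi$ iff $R[w]\dashv\phi$ for all $w\in s$. A pointed state model over $\mathsf{X}$ is $(M,s)$ with $s$ a state on $M$; a state property over $\mathsf{X}$ is a class of pointed state models over $\mathsf{X}$; $\|\phi\|_{\mathsf{X}}:=\{(M,s): M,s\models\phi\}$. World $k$-bisimilarity: $w\rightleftharpoons_0 w'$ iff they agree on all $p\in\mathsf{X}$; $w\rightleftharpoons_{k+1} w'$ iff $w\rightleftharpoons_0 w'$, each $v\in R[w]$ has $v'\in R'[w']$ with $v\rightleftharpoons_k v'$ and each $v'\in R'[w']$ has $v\in R[w]$ with $v\rightleftharpoons_k v'$. State $k$-bisimilarity $M,s\rightleftharpoons_k M',s'$: each $w\in s$ is $k$-bisimilar to some $w'\in s'$ and vice versa. $\mathcal{P}$ is invariant under $k$-bisimulation if $(M,s)\in\mathcal{P}$ and $M,s\rightleftharpoons_k M',s'$ imply $(M',s')\in\mathcal{P}$. *)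

From Stdlib Require Import List.



Inductive form (X : Type) : Type :=
| Var : X -> form X
| Neg : form X -> form X
| And : form X -> form X -> form X
| Or  : form X -> form X -> form X
| Dia : form X -> form X
| NE  : form X
| GOr : form X -> form X -> form X.
Arguments Var {X}. Arguments Neg {X}. Arguments And {X}. Arguments Or {X}. Arguments Dia {X}. Arguments NE {X}. Arguments GOr {X}.

(* A model over X: nonempty carrier (witness w0), accessibility R, valuation V. *)
Record model (X : Type) : Type := Model {
  W  : Type;
  w0 : W;
  R  : W -> W -> Prop;
  V  : X -> W -> Prop }.
Arguments W {X}. Arguments R {X}. Arguments V {X}.

Definition state {X} (M : model X) := W M -> Prop.

Definition is_union {A : Type} (s t u : A -> Prop) : Prop :=
  forall w, s w <-> (t w \/ u w).

(* sem phi = (support, anti-support) *)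
Fixpoint sem {X} (M : model X) (phi : form X) : (state M -> Prop) * (state M -> Prop) :=
  match phi with
  | Var p => (fun s => forall w, s w -> V M p w,
              fun s => forall w, s w -> ~ V M p w)
  | NE => (fun s => exists w, s w, fun s => forall w, ~ s w)
  | Neg a => (snd (sem M a), fst (sem M a))
  | And a b => (fun s => fst (sem M a) s /\ fst (sem M b) s,
                fun s => exists t u, is_union s t u /\ snd (sem M a) t /\ snd (sem M b) u)
  | Or a b => (fun s => exists t u, is_union s t u /\ fst (sem M a) t /\ fst (sem M b) u,
               fun s => snd (sem M a) s /\ snd (sem M b) s)
  | GOr a b => (fun s => fst (sem M a) s \/ fst (sem M b) s,
                fun s => snd (sem M a) s /\ snd (sem M b) s)
  | Dia a => (fun s => forall w, s w ->
                 exists t : state M, (forall v, t v -> R M w v) /\ (exists v, t v) /\ fst (sem M a) t,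
              fun s => forall w, s w -> snd (sem M a) (R M w))
  end.

Definition supports {X : Type} (M : model X) (s : state M) (phi : form X) : Prop := fst (sem M phi) s.

Definition state_property (X : Type) := forall M : model X, state M -> Prop.

Definition extension {X} (phi : form X) : state_property X := fun M s => supports M s phi.

Fixpoint wbisim {X} (k : nat) (M M' : model X) (w : W M) (w' : W M') : Prop :=
  (forall p : X, V M p w <-> V M' p w') /\
  match k with
  | 0 => True
  | S k' => (forall v, R M w v -> exists v', R M' w' v' /\ wbisim k' M M' v v') /\
            (forall v', R M' w' v' -> exists v, R M w v /\ wbisim k' M M' v v')
  end.

Definition sbisim {X} (k : nat) (M : model X) (s : state M) (M' : model X) (s' : state M') : Prop :=
  (forall w, s w -> exists w', s' w' /\ wbisim k M M' w w') /\
  (forall w', s' w' -> exists w, s w /\ wbisim k M M' w w').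

Definition invariant_k {X} (k : nat) (P : state_property X) : Prop :=
  forall (M : model X) (s : state M) (M' : model X) (s' : state M'),
    P M s -> sbisim k M s M' s' -> P M' s'.

Definition finite_type (X : Type) : Prop := exists l : list X, forall x : X, In x l.

(* Formulas of modal depth at most k are preserved, together with their
   anti-support, by k-bisimulation of states. Conversely, since X is finite
   there are only finitely many Hintikka formulas of depth k; they are flat,
   every world satisfies one of them, and worlds satisfying the same one are
   k-bisimilar. A state is therefore determined up to k-bisimulation by the set
   C of Hintikka formulas it realizes, and this set is described by the formula
   \/_{c in C} (c /\ NE). If P is k-invariant it is the global disjunction of
   these descriptions over the sets C realized by some state in P. *)

From Stdlib Require Import List Classical Lia.
Import ListNotations.

Fixpoint powerlist {A : Type} (l : list A) : list (list A) :=
  match l with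
  | [] => [[]]
  | x :: l' => map (cons x) (powerlist l') ++ powerlist l'
  end.

Lemma powerlist_filter {A : Type} (Q : A -> Prop) (l : list A) :
  exists L, In L (powerlist l) /\ forall x, In x L <-> In x l /\ Q x.
Proof.
  induction l as [|a l [L [HL HQ]]]; simpl.
  - exists []; split; [left; reflexivity | simpl; tauto].
  - destruct (classic (Q a)) as [Qa | nQa].
    + exists (a :: L); split.
      * apply in_or_app; left; apply in_map, HL.
      * intros x; simpl; rewrite HQ; split; [intros [<- | ?] | intros [[<- | ?] ?]]; tauto.
    + exists L; split.
      * apply in_or_app; right; exact HL.
      * intros x; rewrite HQ; split; [tauto | intros [[<- | ?] ?]; tauto].
Qed.

Lemma powerlist_incl {A : Type} (l L : list A) : In L (powerlist l) -> incl L l.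
Proof.
  revert L; induction l as [|a l IH]; simpl; intros L HL x Hx.
  - destruct HL as [<- | []]; destruct Hx.
  - apply in_app_or in HL as [HL | HL].
    + apply in_map_iff in HL as [L' [<- HL']].
      destruct Hx as [<- | Hx]; [left | right; apply (IH L')]; auto.
    + right; exact (IH L HL x Hx).
Qed.

Section Flat.

Context {X : Type}.

Definition antisupports (M : model X) (s : state M) (phi : form X) : Prop :=
  snd (sem M phi) s.

Definition flat (M : model X) (phi : form X) (A : W M -> Prop) : Prop :=
  forall s : state M,
    (supports M s phi <-> forall w, s w -> A w) /\
    (antisupports M s phi <-> forall w, s w -> ~ A w).

Lemma ex_union_cover {T : Type} (Pt Pu : (T -> Prop) -> Prop) (A B : T -> Prop) :
  (forall t, Pt t <-> forall w, t w -> A w) ->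
  (forall u, Pu u <-> forall w, u w -> B w) ->
  forall s, (exists t u, is_union s t u /\ Pt t /\ Pu u) <-> (forall w, s w -> A w \/ B w).
Proof.
  intros HA HB s; split.
  - intros (t & u & Hs & Ht & Hu) w Hw.
    destruct (proj1 (Hs w) Hw); [left; apply HA with t | right; apply HB with u]; auto.
  - intros H; exists (fun w => s w /\ A w), (fun w => s w /\ B w); split; [|split].
    + intros w; split; [intros Hw; destruct (H w Hw) | intros [[? _] | [? _]]]; auto.
    + apply HA; intros w [_ ?]; auto.
    + apply HB; intros w [_ ?]; auto.
Qed.

Lemma ex_nonempty_subset {T : Type} (Pt : (T -> Prop) -> Prop) (A r : T -> Prop) :
  (forall t, (exists v, t v) -> (Pt t <-> forall v, t v -> A v)) ->
  (exists t, (forall v, t v -> r v) /\ (exists v, t v) /\ Pt t) <-> (exists v, r v /\ A v).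
Proof.
  intros HA; split.
  - intros (t & Htr & [v Hv] & Ht); exists v; split; auto.
    apply (HA t); eauto.
  - intros [v [Hv HAv]]; exists (fun x => x = v).
    split; [intros x ->; auto | split; [exists v; reflexivity |]].
    apply HA; [exists v; reflexivity | intros x ->; auto].
Qed.

Lemma flat_Var (M : model X) (p : X) : flat M (Var p) (V M p).
Proof. intros s; split; reflexivity. Qed.

Lemma flat_Neg (M : model X) a A : flat M a A -> flat M (Neg a) (fun w => ~ A w).
Proof.
  intros Ha s; destruct (Ha s) as [Hsup Hanti]; split; [exact Hanti |].
  unfold antisupports; simpl; fold (supports M s a); rewrite Hsup.
  split; intros H w Hw; [intros nA; exact (nA (H w Hw)) | apply NNPP, H, Hw].
Qed.

Lemma flat_And (M : model X) a b A B :
  flat M a A -> flat M b B -> flat M (And a b) (fun w => A w /\ B w).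
Proof.
  intros Ha Hb s; split.
  - unfold supports; simpl; fold (supports M s a) (supports M s b).
    rewrite (proj1 (Ha s)), (proj1 (Hb s)); firstorder.
  - unfold antisupports; simpl.
    rewrite (ex_union_cover _ _ (fun w => ~ A w) (fun w => ~ B w)
               (fun t => proj2 (Ha t)) (fun u => proj2 (Hb u))).
    split; intros H w Hw; specialize (H w Hw); [tauto |].
    destruct (classic (A w)); tauto.
Qed.

Lemma flat_Or (M : model X) a b A B :
  flat M a A -> flat M b B -> flat M (Or a b) (fun w => A w \/ B w).
Proof.
  intros Ha Hb s; split.
  - exact (ex_union_cover _ _ A B (fun t => proj1 (Ha t)) (fun u => proj1 (Hb u)) s).
  - unfold antisupports; simpl; fold (antisupports M s a) (antisupports M s b).
    rewrite (proj2 (Ha s)), (proj2 (Hb s)); firstorder.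
Qed.

(* Only nonempty states are relevant for the support of [a], so [a] may be [NE]. *)
Lemma flat_Dia (M : model X) a A :
  (forall t, (exists v, t v) -> (supports M t a <-> forall v, t v -> A v)) ->
  (forall t, antisupports M t a <-> forall v, t v -> ~ A v) ->
  flat M (Dia a) (fun w => exists v, R M w v /\ A v).
Proof.
  intros Hsup Hanti s; split.
  - unfold supports; simpl.
    split; intros H w Hw; apply (ex_nonempty_subset _ _ _ Hsup); auto.
  - unfold antisupports; simpl.
    split; intros H w Hw.
    + intros [v [Hv HAv]]; exact (proj1 (Hanti _) (H w Hw) v Hv HAv).
    + apply Hanti; intros v Hv HAv; apply (H w Hw); eauto.
Qed.

Fixpoint classical (phi : form X) : Prop :=
  match phi with
  | Var _ => True
  | Neg a => classical a
  | And a b | Or a b => classical a /\ classical b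
  | Dia a => classical a \/ a = NE
  | NE | GOr _ _ => False
  end.

Fixpoint holds (M : model X) (w : W M) (phi : form X) : Prop :=
  match phi with
  | Var p => V M p w
  | NE => True
  | Neg a => ~ holds M w a
  | And a b => holds M w a /\ holds M w b
  | Or a b | GOr a b => holds M w a \/ holds M w b
  | Dia a => exists v, R M w v /\ holds M v a
  end.

Lemma classical_flat (phi : form X) (M : model X) :
  classical phi -> flat M phi (fun w => holds M w phi).
Proof.
  induction phi as [p | a IHa | a IHa b IHb | a IHa b IHb | a IHa | | a IHa b IHb];
    simpl; intros Hc.
  - apply flat_Var.
  - exact (flat_Neg _ _ _ (IHa Hc)).
  - exact (flat_And _ _ _ _ _ (IHa (proj1 Hc)) (IHb (proj2 Hc))).
  - exact (flat_Or _ _ _ _ _ (IHa (proj1 Hc)) (IHb (proj2 Hc))).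
  - apply flat_Dia; destruct Hc as [Hc | ->].
    + intros t _; exact (proj1 (IHa Hc t)).
    + intros t Ht; simpl; split; auto.
    + intros t; exact (proj2 (IHa Hc t)).
    + intros t; simpl; firstorder.
  - contradiction.
  - contradiction.
Qed.

Corollary supports_classical (M : model X) (s : state M) phi :
  classical phi -> supports M s phi <-> forall w, s w -> holds M w phi.
Proof. intros Hc; exact (proj1 (classical_flat phi M Hc s)). Qed.

End Flat.

Section Hintikka.

Context {X : Type}.

(* With no propositional variable available, the flat tautology is built from [Dia NE]. *)
Definition Top : form X := Or (Dia NE) (Neg (Dia NE)).
Definition Box (a : form X) : form X := Neg (Dia (Neg a)).
Definition BigAnd (l : list (form X)) : form X := fold_right And Top l.
Definition BigOr (l : list (form X)) : form X := fold_right Or (Neg Top) l.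

Lemma holds_Top (M : model X) w : holds M w Top.
Proof. apply classic. Qed.

Lemma holds_Box (M : model X) w a : holds M w (Box a) <-> forall v, R M w v -> holds M v a.
Proof.
  simpl; split.
  - intros H v Hv; apply NNPP; intros Hn; apply H; eauto.
  - intros H [v [Hv Hn]]; exact (Hn (H v Hv)).
Qed.

Lemma holds_BigAnd (M : model X) w l : holds M w (BigAnd l) <-> forall c, In c l -> holds M w c.
Proof.
  induction l as [|a l IH]; simpl.
  - split; [intros _ c [] | intros _; apply holds_Top].
  - rewrite IH; split; [intros [? ?] c [<- | ?] | intros H; split]; auto.
Qed.

Lemma holds_BigOr (M : model X) w l : holds M w (BigOr l) <-> exists c, In c l /\ holds M w c.
Proof.
  induction l as [|a l IH]; simpl.
  - split; [intros H; destruct (H (holds_Top M w)) | intros [c [[] _]]].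
  - rewrite IH; split; [intros [? | [c [? ?]]] | intros [c [[<- | ?] ?]]]; eauto.
Qed.

Lemma classical_Top : classical Top.
Proof. simpl; auto. Qed.

Lemma classical_BigAnd l : (forall c, In c l -> classical c) -> classical (BigAnd l).
Proof. induction l; simpl; intros H; [apply classical_Top | split; auto]. Qed.

Lemma classical_BigOr l : (forall c, In c l -> classical c) -> classical (BigOr l).
Proof. induction l; simpl; intros H; [apply classical_Top | split; auto]. Qed.

Fixpoint literal_types (l : list X) : list (form X) :=
  match l with
  | [] => [Top]
  | p :: l' => flat_map (fun c => [And (Var p) c; And (Neg (Var p)) c]) (literal_types l')
  end.

Lemma literal_types_classical l c : In c (literal_types l) -> classical c.
Proof.
  revert c; induction l as [|p l IH]; simpl; intros c Hc.
  - destruct Hc as [<- | []]; apply classical_Top.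
  - apply in_flat_map in Hc as [c' [Hc' [<- | [<- | []]]]]; simpl; auto.
Qed.

Lemma literal_types_exhaustive l (M : model X) w :
  exists c, In c (literal_types l) /\ holds M w c.
Proof.
  induction l as [|p l [c [Hc Hw]]]; simpl.
  - exists Top; split; [left; reflexivity | apply holds_Top].
  - destruct (classic (V M p w)); [exists (And (Var p) c) | exists (And (Neg (Var p)) c)];
      (split; [apply in_flat_map; exists c; simpl | simpl]); auto.
Qed.

Lemma literal_types_agree l c : In c (literal_types l) ->
  forall (M M' : model X) w w', holds M w c -> holds M' w' c ->
  forall p, In p l -> (V M p w <-> V M' p w').
Proof.
  revert c; induction l as [|q l IH]; simpl; intros c Hc M M' w w' Hw Hw' p Hp.
  - destruct Hp.
  - apply in_flat_map in Hc as [c' [Hc' Hq]].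
    destruct Hq as [<- | [<- | []]]; destruct Hw as [Aw Bw], Hw' as [Aw' Bw']; simpl in Aw, Aw';
      destruct Hp as [<- | Hp]; first [tauto | exact (IH c' Hc' M M' w w' Bw Bw' p Hp)].
Qed.

Fixpoint hintikka (l : list X) (k : nat) : list (form X) :=
  match k with
  | 0 => literal_types l
  | S k' =>
      flat_map (fun c => map (fun C => And c (And (BigAnd (map Dia C)) (Box (BigOr C))))
                             (powerlist (hintikka l k')))
               (literal_types l)
  end.

Lemma in_hintikka_S l k c :
  In c (hintikka l (S k)) <-> exists c0 C, In c0 (literal_types l) /\
    In C (powerlist (hintikka l k)) /\ c = And c0 (And (BigAnd (map Dia C)) (Box (BigOr C))).
Proof.
  simpl; rewrite in_flat_map; split.
  - intros [c0 [Hc0 HC]]; apply in_map_iff in HC as [C [<- HC]]; eauto.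
  - intros (c0 & C & Hc0 & HC & ->); exists c0; split; [|apply in_map_iff; exists C]; auto.
Qed.

Lemma hintikka_classical l k c : In c (hintikka l k) -> classical c.
Proof.
  revert c; induction k as [|k IH]; intros c Hc.
  - exact (literal_types_classical l c Hc).
  - apply in_hintikka_S in Hc as (c0 & C & Hc0 & HC & ->); simpl.
    split; [exact (literal_types_classical l c0 Hc0) | split].
    + apply classical_BigAnd; intros d Hd; apply in_map_iff in Hd as [d' [<- Hd']].
      left; apply IH, (powerlist_incl _ _ HC), Hd'.
    + left; apply classical_BigOr; intros d Hd; apply IH, (powerlist_incl _ _ HC), Hd.
Qed.

Lemma hintikka_exhaustive l k (M : model X) w : exists c, In c (hintikka l k) /\ holds M w c.
Proof.
  revert w; induction k as [|k IH]; intros w.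
  - apply literal_types_exhaustive.
  - destruct (literal_types_exhaustive l M w) as [c0 [Hc0 Hw0]].
    destruct (powerlist_filter (fun c => exists v, R M w v /\ holds M v c) (hintikka l k))
      as [C [HC HQ]].
    exists (And c0 (And (BigAnd (map Dia C)) (Box (BigOr C)))); split.
    + apply in_hintikka_S; eauto 6.
    + split; [exact Hw0 | split].
      * apply holds_BigAnd; intros d Hd; apply in_map_iff in Hd as [c [<- Hc]].
        exact (proj2 (proj1 (HQ c) Hc)).
      * apply holds_Box; intros v Hv; apply holds_BigOr.
        destruct (IH v) as [c [Hc Hvc]]; exists c; split; [apply HQ; eauto | exact Hvc].
Qed.

Lemma hintikka_wbisim l (Hl : forall p, In p l) k c : In c (hintikka l k) ->
  forall (M M' : model X) w w', holds M w c -> holds M' w' c -> wbisim k M M' w w'.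
Proof.
  revert c; induction k as [|k IH]; intros c Hc M M' w w' Hw Hw'.
  - split; [intros p; exact (literal_types_agree l c Hc M M' w w' Hw Hw' p (Hl p)) | exact I].
  - apply in_hintikka_S in Hc as (c0 & C & Hc0 & HC & ->).
    destruct Hw as [A [D B]], Hw' as [A' [D' B']].
    rewrite holds_BigAnd in D, D'; rewrite holds_Box in B, B'.
    split; [intros p; exact (literal_types_agree l c0 Hc0 M M' w w' A A' p (Hl p)) | split].
    + intros v Hv; apply B, holds_BigOr in Hv as [d [Hd Hvd]].
      destruct (D' (Dia d) (in_map _ _ _ Hd)) as [v' [Hv' Hv'd]].
      exists v'; split; [exact Hv' | apply (IH d); auto; exact (powerlist_incl _ _ HC d Hd)].
    + intros v' Hv'; apply B', holds_BigOr in Hv' as [d [Hd Hv'd]].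
      destruct (D (Dia d) (in_map _ _ _ Hd)) as [v [Hv Hvd]].
      exists v; split; [exact Hv | apply (IH d); auto; exact (powerlist_incl _ _ HC d Hd)].
Qed.

Definition state_char (C : list (form X)) : form X :=
  fold_right (fun c psi => Or (And c NE) psi) (Neg NE) C.

Lemma supports_state_char (M : model X) (s : state M) C :
  (forall c, In c C -> classical c) ->
  supports M s (state_char C) <->
    (forall w, s w -> exists c, In c C /\ holds M w c) /\
    (forall c, In c C -> exists w, s w /\ holds M w c).
Proof.
  revert s; induction C as [|a C IH]; intros s HC.
  - unfold supports; simpl; split.
    + intros H; split; [intros w Hw; destruct (H w Hw) | intros c []].
    + intros [H _] w Hw; destruct (H w Hw) as [c [[] _]].
  - assert (Ha : forall t, supports M t a <-> forall w, t w -> holds M w a)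
      by (intros t; apply supports_classical, HC; left; reflexivity).
    assert (IHC : forall u, supports M u (state_char C) <->
      (forall w, u w -> exists c, In c C /\ holds M w c) /\
      (forall c, In c C -> exists w, u w /\ holds M w c))
      by (intros u; apply IH; intros c Hc; apply HC; right; exact Hc).
    assert (Hcons : supports M s (state_char (a :: C)) <->
      exists t u, is_union s t u /\ (supports M t a /\ exists w, t w) /\
                  supports M u (state_char C)) by reflexivity.
    rewrite Hcons.
    split.
    + intros (t & u & Hs & [Ht [w0 Hw0]] & Hu).
      rewrite Ha in Ht; apply IHC in Hu as [Hu1 Hu2]; split.
      * intros w Hw; destruct (proj1 (Hs w) Hw) as [Hw1 | Hw1].
        -- exists a; split; [left |]; auto.
        -- destruct (Hu1 w Hw1) as [c [? ?]]; exists c; split; [right |]; auto.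
      * intros c [<- | Hc].
        -- exists w0; split; [apply Hs; left |]; auto.
        -- destruct (Hu2 c Hc) as [w [? ?]]; exists w; split; [apply Hs; right |]; auto.
    + intros [H1 H2].
      exists (fun w => s w /\ holds M w a),
             (fun w => s w /\ exists c, In c C /\ holds M w c).
      split; [| split; [split |]].
      * intros w; split; [| intros [[? _] | [? _]]; auto].
        intros Hw; destruct (H1 w Hw) as [c [[<- | Hc] ?]]; [left | right]; eauto.
      * apply Ha; intros w [_ ?]; auto.
      * destruct (H2 a (or_introl eq_refl)) as [w ?]; exists w; auto.
      * apply IHC; split; [intros w [_ ?]; auto |].
        intros c Hc; destruct (H2 c (or_intror Hc)) as [w [? ?]]; exists w; eauto.
Qed.

Lemma state_char_realized l k (M : model X) (s : state M) :
  exists C, In C (powerlist (hintikka l k)) /\ supports M s (state_char C).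
Proof.
  destruct (powerlist_filter (fun c => exists w, s w /\ holds M w c) (hintikka l k))
    as [C [HC HQ]].
  exists C; split; [exact HC |].
  apply supports_state_char.
  - intros c Hc; exact (hintikka_classical l k c (powerlist_incl _ _ HC c Hc)).
  - split; [| intros c Hc; exact (proj2 (proj1 (HQ c) Hc))].
    intros w Hw; destruct (hintikka_exhaustive l k M w) as [c [Hc Hwc]].
    exists c; split; [apply HQ; eauto | exact Hwc].
Qed.

Lemma state_char_sbisim l (Hl : forall p, In p l) k C :
  In C (powerlist (hintikka l k)) ->
  forall (M M' : model X) (s : state M) (s' : state M'),
  supports M s (state_char C) -> supports M' s' (state_char C) -> sbisim k M s M' s'.
Proof.
  intros HC M M' s s'.
  assert (HCk : incl C (hintikka l k)) by exact (powerlist_incl _ _ HC).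
  assert (HcC : forall c, In c C -> classical c)
    by (intros c Hc; exact (hintikka_classical l k c (HCk c Hc))).
  rewrite !supports_state_char by exact HcC.
  intros [Hs1 Hs2] [Hs1' Hs2']; split.
  - intros w Hw; destruct (Hs1 w Hw) as [c [Hc Hwc]].
    destruct (Hs2' c Hc) as [w' [Hw' Hw'c]].
    exists w'; split; [exact Hw' | exact (hintikka_wbisim l Hl k c (HCk c Hc) M M' w w' Hwc Hw'c)].
  - intros w' Hw'; destruct (Hs1' w' Hw') as [c [Hc Hw'c]].
    destruct (Hs2 c Hc) as [w [Hw Hwc]].
    exists w; split; [exact Hw | exact (hintikka_wbisim l Hl k c (HCk c Hc) M M' w w' Hwc Hw'c)].
Qed.

Definition Absurd : form X := And NE (Neg NE).

Definition BigGOr (l : list (form X)) : form X := fold_right GOr Absurd l.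

Lemma supports_BigGOr (M : model X) (s : state M) l :
  supports M s (BigGOr l) <-> exists phi, In phi l /\ supports M s phi.
Proof.
  induction l as [|a l IH].
  - unfold supports; simpl; split; [intros [[w Hw] H]; destruct (H w Hw) | intros [_ [[] _]]].
  - change (supports M s a \/ supports M s (BigGOr l) <->
            exists phi, In phi (a :: l) /\ supports M s phi).
    rewrite IH; simpl.
    split; [intros [? | [phi [? ?]]] | intros [phi [[<- | ?] ?]]]; eauto.
Qed.

End Hintikka.

Section Invariance.

Context {X : Type}.

Fixpoint depth (phi : form X) : nat :=
  match phi with
  | Var _ | NE => 0
  | Neg a => depth a
  | And a b | Or a b | GOr a b => max (depth a) (depth b)
  | Dia a => S (depth a)
  end.

Definition preserved (k : nat) (phi : form X) : Prop :=
  forall (M M' : model X) (s : state M) (s' : state M'), sbisim k M s M' s' ->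
    (supports M s phi -> supports M' s' phi) /\
    (antisupports M s phi -> antisupports M' s' phi).

Lemma wbisim_atoms k (M M' : model X) w w' :
  wbisim k M M' w w' -> forall p, V M p w <-> V M' p w'.
Proof. destruct k; intros [H _]; exact H. Qed.

Definition bisim_image k (M M' : model X) (s' : state M') (t : state M) : state M' :=
  fun w' => s' w' /\ exists w, t w /\ wbisim k M M' w w'.

Lemma sbisim_image k (M M' : model X) s s' (t : state M) :
  sbisim k M s M' s' -> (forall w, t w -> s w) -> sbisim k M t M' (bisim_image k M M' s' t).
Proof.
  intros [Hforth _] Hts; split.
  - intros w Hw; destruct (Hforth w (Hts w Hw)) as [w' [Hw' Hww']].
    exists w'; split; [split |]; eauto.
  - intros w' [_ [w [Hw Hww']]]; eauto.
Qed.

Lemma is_union_image k (M M' : model X) s s' (t u : state M) :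
  sbisim k M s M' s' -> is_union s t u ->
  is_union s' (bisim_image k M M' s' t) (bisim_image k M M' s' u).
Proof.
  intros [_ Hback] Hs w'; split.
  - intros Hw'; destruct (Hback w' Hw') as [w [Hw Hww']].
    destruct (proj1 (Hs w) Hw); [left | right]; split; eauto.
  - intros [[? _] | [? _]]; auto.
Qed.

Lemma preserved_Var k p : preserved k (Var p).
Proof.
  intros M M' s s' [_ Hback]; split; intros H w' Hw';
    destruct (Hback w' Hw') as [w [Hw Hww']]; rewrite <- (wbisim_atoms _ _ _ _ _ Hww' p);
    exact (H w Hw).
Qed.

Lemma preserved_NE k : preserved k NE.
Proof.
  intros M M' s s' [Hforth Hback]; split.
  - intros [w Hw]; destruct (Hforth w Hw) as [w' [Hw' _]]; exists w'; exact Hw'.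
  - intros H w' Hw'; destruct (Hback w' Hw') as [w [Hw _]]; exact (H w Hw).
Qed.

Lemma preserved_Neg k a : preserved k a -> preserved k (Neg a).
Proof. intros Ha M M' s s' Hss'; destruct (Ha M M' s s' Hss'); split; assumption. Qed.

Lemma preserved_And k a b : preserved k a -> preserved k b -> preserved k (And a b).
Proof.
  intros Ha Hb M M' s s' Hss'; split.
  - intros [Hsa Hsb]; split; [apply (Ha M M' s s') | apply (Hb M M' s s')]; auto.
  - intros (t & u & Hs & Ht & Hu).
    exists (bisim_image k M M' s' t), (bisim_image k M M' s' u).
    split; [exact (is_union_image _ _ _ _ _ _ _ Hss' Hs) | split].
    + refine (proj2 (Ha M M' t _ (sbisim_image _ _ _ _ _ _ Hss' _)) Ht).
      intros w Hw; apply Hs; left; exact Hw.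
    + refine (proj2 (Hb M M' u _ (sbisim_image _ _ _ _ _ _ Hss' _)) Hu).
      intros w Hw; apply Hs; right; exact Hw.
Qed.

Lemma preserved_Or k a b : preserved k a -> preserved k b -> preserved k (Or a b).
Proof.
  intros Ha Hb M M' s s' Hss'; split.
  - intros (t & u & Hs & Ht & Hu).
    exists (bisim_image k M M' s' t), (bisim_image k M M' s' u).
    split; [exact (is_union_image _ _ _ _ _ _ _ Hss' Hs) | split].
    + refine (proj1 (Ha M M' t _ (sbisim_image _ _ _ _ _ _ Hss' _)) Ht).
      intros w Hw; apply Hs; left; exact Hw.
    + refine (proj1 (Hb M M' u _ (sbisim_image _ _ _ _ _ _ Hss' _)) Hu).
      intros w Hw; apply Hs; right; exact Hw.
  - intros [Hsa Hsb]; split; [apply (Ha M M' s s') | apply (Hb M M' s s')]; auto.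
Qed.

Lemma preserved_GOr k a b : preserved k a -> preserved k b -> preserved k (GOr a b).
Proof.
  intros Ha Hb M M' s s' Hss'; split.
  - intros [H | H]; [left; apply (Ha M M' s s') | right; apply (Hb M M' s s')]; auto.
  - intros [Hsa Hsb]; split; [apply (Ha M M' s s') | apply (Hb M M' s s')]; auto.
Qed.

Lemma preserved_Dia k a : preserved k a -> preserved (S k) (Dia a).
Proof.
  intros Ha M M' s s' [_ Hback]; split; intros H w' Hw';
    destruct (Hback w' Hw') as [w [Hw [_ [Hforth_w Hback_w]]]].
  - destruct (H w Hw) as (t & Htw & [v Hv] & Ht).
    assert (Hsucc : sbisim k M (R M w) M' (R M' w')) by (split; assumption).
    exists (bisim_image k M M' (R M' w') t); split; [intros v' [? _]; assumption | split].
    + destruct (Hforth_w v (Htw v Hv)) as [v' [Hv' Hvv']]; exists v'; split; eauto.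
    + exact (proj1 (Ha M M' t _ (sbisim_image _ _ _ _ _ _ Hsucc Htw)) Ht).
  - refine (proj2 (Ha M M' (R M w) (R M' w') _) (H w Hw)); split; assumption.
Qed.

Lemma depth_preserved (phi : form X) : forall k, depth phi <= k -> preserved k phi.
Proof.
  induction phi as [p | a IHa | a IHa b IHb | a IHa b IHb | a IHa | | a IHa b IHb];
    simpl; intros k Hk.
  - apply preserved_Var.
  - apply preserved_Neg, IHa, Hk.
  - apply preserved_And; [apply IHa | apply IHb]; lia.
  - apply preserved_Or; [apply IHa | apply IHb]; lia.
  - destruct k as [|k]; [lia |]; apply preserved_Dia, IHa; lia.
  - apply preserved_NE.
  - apply preserved_GOr; [apply IHa | apply IHb]; lia.
Qed.

End Invariance.

Theorem theorem3p15 (X : Type) (HX : finite_type X) (P : state_property X) :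
  (exists phi : form X, forall (M : model X) (s : state M), P M s <-> extension phi M s) <->
  (exists k : nat, invariant_k k P).
Proof.
  split.
  - intros [phi Hphi]; exists (depth phi); intros M s M' s' HP Hss'.
    apply Hphi; apply Hphi in HP.
    exact (proj1 (depth_preserved phi (depth phi) (le_n _) M M' s s' Hss') HP).
  - destruct HX as [l Hl]; intros [k Hinv].
    destruct (powerlist_filter
                (fun C => exists M0 s0, P M0 s0 /\ supports M0 s0 (state_char C))
                (powerlist (hintikka l k))) as [Cs [_ HCs]].
    exists (BigGOr (map state_char Cs)); intros M s.
    unfold extension; rewrite supports_BigGOr; split.
    + intros HP; destruct (state_char_realized l k M s) as [C [HC Hs]].
      exists (state_char C); split; [apply in_map, HCs; split; eauto | exact Hs].
    + intros [phi [Hphi Hs]]; apply in_map_iff in Hphi as [C [<- HC]].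
      apply HCs in HC as [HC [M0 [s0 [HP0 Hs0]]]].
      exact (Hinv M0 s0 M s HP0 (state_char_sbisim l Hl k C HC M0 M s0 s Hs0 Hs)).
Qed.
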